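(* Let $k\geq 2$ be an integer and let $G=(V,E)$ be a graph. Let $X_1,X_2\subseteq V$. Let $\sim$ be a symmetric binary relation on $V^2$ such that (a) for every $(u,v)\in V^2$ and $w\in X_1$, $w$ has at most $\Delta_1$ neighbours $z\in X_2$, and at most $s_1$ of them satisfy $(u,v)\sim(z,w)$; (b) for every $(u,v)\in V^2$ and $w\in X_2$, $w$ has at most $\Delta_2$ neighbours $z\in X_1$, and at most $s_2$ of them satisfy $(u,v)\sim(z,w)$. Let $M=\max(\Delta_1s_2,\Delta_2s_1)$. Then the number of homomorphic $2k$-cycles $(x_1,\dots,x_{2k})\in(X_1\times X_2\times X_1\times\dots\times X_2)\cup(X_2\times X_1\times X_2\times\dots\times X_1)$ in $G$ such that $(x_i,x_{i+1})\sim(x_j,x_{j+1})$ for some $i\neq j$ is at most $$32k\left(kM\hom(C_{2k-2},G)\hom(C_{2k},G)\right)^{1/2}.$$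
   Context: A homomorphic $2k$-cycle in $G$ is a tuple $(x_1,\dots,x_{2k})\in V^{2k}$ with $x_ix_{i+1}\in E$ for all $i$, indices modulo $2k$ (so $x_{2k+1}=x_1$). $\hom(H,G)$ is the number of homomorphisms from $H$ to $G$. Convention: $C_2$ is a single edge, so $\hom(C_2,G)=2|E|$. *)

From mathcomp Require Import all_boot all_order all_algebra.
Set Implicit Arguments. Unset Strict Implicit. Unset Printing Implicit Defensive.
Import Order.TTheory GRing.Theory Num.Theory.

Definition cyc_succ (n : nat) (i : 'I_n) : 'I_n := ordS i.

Definition is_hom_cycle (T : finType) (e : rel T) (n : nat) (x : {ffun 'I_n -> T}) : bool :=
  [forall i : 'I_n, e (x i) (x (cyc_succ i))].

(* hom(C_n, G) = number of homomorphic n-cycles (for n = 2 this is 2|E|) *)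
Definition hom_cycle (T : finType) (e : rel T) (n : nat) : nat :=
  #|[set x : {ffun 'I_n -> T} | is_hom_cycle e x]|.

Definition alternating (T : finType) (A B : {set T}) (n : nat) (x : {ffun 'I_n -> T}) : bool :=
  [forall i : 'I_n, x i \in (if odd i then B else A)].

Definition bad_cycles (T : finType) (e : rel T) (X1 X2 : {set T})
    (sim : T * T -> T * T -> bool) (n : nat) : {set {ffun 'I_n -> T}} :=
  [set x : {ffun 'I_n -> T} | [&& is_hom_cycle e x,
      alternating X1 X2 x || alternating X2 X1 x &
      [exists i : 'I_n, exists j : 'I_n,
         (i != j) && sim (x i, x (cyc_succ i)) (x j, x (cyc_succ j))]]].

(* Write n = 2k and read an n-tuple x cyclically, x_t := x_(t mod n).
   1. Every counted (bad) cycle has a rotation which is ROOTED: its first edge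
      x_0 x_1 goes from one side Y1 to the other side Y2 and is similar to an
      edge x_(d+1) x_(d+2) with d < k.  Hence #bad <= n (#rooted(X1,X2) +
      #rooted(X2,X1)) (lemma card_bad_cycles_le).
   2. A rooted cycle is determined by its two halves: the walk x_0 ... x_(k+1)
      and the walk x_(k+1) ... x_(2k) x_1, which share the KEY (x_0, x_1, x_(k+1)).
      By Cauchy-Schwarz, #rooted^2 <= P1 * P2, where Pi counts pairs of i-th
      halves with equal keys (lemma card_sqr_le_key_pairs).
   3. Gluing two first halves along their common ends gives a 2k-cycle w plus
      a vertex z = x_0 adjacent to w_0 with (w_t, w_(t+1)) ~ (z, w_0) for some
      t < k, so P1 <= k s hom(C_2k); gluing two second halves gives a
      (2k-2)-cycle plus a neighbour of w_0, so P2 <= D hom(C_(2k-2)). *)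

From mathcomp Require Import all_boot all_order all_algebra.
From mathcomp Require Import ring zify.
Import Order.TTheory GRing.Theory Num.Theory.
Set Implicit Arguments. Unset Strict Implicit. Unset Printing Implicit Defensive.

(* Cauchy-Schwarz for sums of natural numbers, from 2ab <= a^2 + b^2. *)
Lemma sum_mul_sqr_le (I : finType) (u v : I -> nat) :
  (\sum_i u i * v i) ^ 2 <= (\sum_i u i ^ 2) * (\sum_i v i ^ 2).
Proof.
rewrite -(@leq_pmul2l 2) //.
have -> : 2 * (\sum_i u i * v i) ^ 2 =
    \sum_i \sum_j 2 * ((u i * v j) * (u j * v i)).
  rewrite expnS expn1 big_distrl /= big_distrr /=; apply: eq_bigr => i _.
  rewrite big_distrr /= big_distrr /=; apply: eq_bigr => j _; ring.
have -> : 2 * ((\sum_i u i ^ 2) * (\sum_i v i ^ 2)) =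
    \sum_i \sum_j ((u i * v j) ^ 2 + (u j * v i) ^ 2).
  have prodE : (\sum_i u i ^ 2) * (\sum_i v i ^ 2) = \sum_i \sum_j (u i * v j) ^ 2.
    rewrite big_distrl; apply: eq_bigr => i _; rewrite big_distrr.
    by apply: eq_bigr => j _; rewrite expnMn.
  rewrite mul2n -addnn {1}prodE prodE [X in _ + X]exchange_big -big_split /=.
  by apply: eq_bigr => i _; rewrite -big_split.
by apply: leq_sum => i _; apply: leq_sum => j _; apply: nat_Cauchy.
Qed.

Lemma card_fibres (X K : finType) (S : {set X}) (f : X -> K) :
  #|S| = \sum_c #|[set x in S | f x == c]|.
Proof.
rewrite -sum1_card (partition_big f predT) //=; apply: eq_bigr => c _.
by rewrite -sum1_card; apply: eq_bigl => x; rewrite !inE.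
Qed.

Definition key_pairs (Y K : finType) (A : {set Y}) (key : Y -> K) : {set Y * Y} :=
  [set p in setX A A | key p.1 == key p.2].

Lemma card_key_pairs (Y K : finType) (A : {set Y}) (key : Y -> K) :
  #|key_pairs A key| = \sum_c #|[set y in A | key y == c]| ^ 2.
Proof.
rewrite (card_fibres _ (fun p => key p.1)); apply: eq_bigr => c _.
rewrite expnS expn1 -cardsX; apply: eq_card => [[y y']]; rewrite !inE /=.
by case: (key y =P c) => [->|]; rewrite ?andbT ?andbF // eq_sym !andbA.
Qed.

(* If x is determined by two "halves" a x and b x having the same key, then
   #S^2 is at most the number of key-pairs of a-halves times that of b-halves:
   split S into key fibres, inject each into a product, apply Cauchy-Schwarz. *)
Lemma card_sqr_le_key_pairs (X Y K : finType) (S : {set X}) (a b : X -> Y)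
    (key : Y -> K) :
  {in S &, forall x x', a x = a x' -> b x = b x' -> x = x'} ->
  {in S, forall x, key (a x) = key (b x)} ->
  #|S| ^ 2 <= #|key_pairs (a @: S) key| * #|key_pairs (b @: S) key|.
Proof.
move=> ab_inj ab_key.
have fibre_le c : #|[set x in S | key (a x) == c]| <=
    #|[set y in a @: S | key y == c]| * #|[set y in b @: S | key y == c]|.
  have inj : {in [set x in S | key (a x) == c] &, injective (fun x => (a x, b x))}.
    by move=> x x' /setIdP[xS _] /setIdP[x'S _] [] /ab_inj; apply.
  rewrite -(card_in_imset inj) -cardsX; apply: subset_leq_card.
  apply/subsetP => _ /imsetP[x /setIdP[xS /eqP kx] ->].
  by rewrite !inE /= !imset_f // -ab_key // kx eqxx.
rewrite !card_key_pairs; apply: leq_trans (sum_mul_sqr_le _ _).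
by rewrite leq_exp2r // (card_fibres S (key \o a)); apply: leq_sum => c _.
Qed.

Lemma card_le_inj_in (X Y : finType) (A : {set X}) (B : {set Y}) (f : X -> Y) :
  {in A &, injective f} -> {in A, forall a, f a \in B} -> #|A| <= #|B|.
Proof.
move=> f_inj fAB; rewrite -(card_in_imset f_inj); apply: subset_leq_card.
by apply/subsetP => _ /imsetP[a aA ->]; apply: fAB.
Qed.

Lemma card_pairs_fibres (X Y : finType) (P : X -> Y -> bool) :
  #|[set q : X * Y | P q.1 q.2]| = \sum_x #|[set y | P x y]|.
Proof.
transitivity (\sum_x \sum_y (if P x y then 1 else 0)).
  rewrite (pair_bigA _ (fun x y => if P x y then 1 else 0)) /=.
  by rewrite -(sum1dep_card (fun q : X * Y => P q.1 q.2)) big_mkcond.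
by apply: eq_bigr => x _; rewrite -(sum1dep_card (fun y => P x y)) [RHS]big_mkcond.
Qed.

Lemma card_exists_le (I X : finType) (P : I -> X -> bool) :
  #|[set x | [exists i, P i x]]| <= \sum_i #|[set x | P i x]|.
Proof.
rewrite -(sum1dep_card (fun x : X => [exists i : I, P i x])) big_mkcond /=.
rewrite [X in _ <= X](eq_bigr (fun i => \sum_x (if P i x then 1 else 0))); last first.
  by move=> i _; rewrite -(sum1dep_card (P i)) big_mkcond.
rewrite exchange_big /=; apply: leq_sum => x _.
by case: existsP => // -[i Pix]; rewrite (bigD1 i) //= Pix leq_addr.
Qed.

Section CyclicTuples.
Variables (T : finType) (n : nat).
Hypothesis n_gt0 : 0 < n.
Local Notation F := {ffun 'I_n -> T}.

Definition cyc_ord (t : nat) : 'I_n := Ordinal (ltn_pmod t n_gt0).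

Definition cnth (x : F) (t : nat) : T := x (cyc_ord t).

Definition tuple_of (g : nat -> T) : F := [ffun i : 'I_n => g i].

Lemma cnth_ord (x : F) (i : 'I_n) : cnth x i = x i.
Proof. by congr (x _); apply: val_inj; rewrite /= modn_small. Qed.

Lemma cnth_eqmod (x : F) a b : a = b %[mod n] -> cnth x a = cnth x b.
Proof. by move=> ab; congr (x _); apply: val_inj. Qed.

Lemma cnth_addn (x : F) t : cnth x (t + n) = cnth x t.
Proof. by apply: cnth_eqmod; rewrite modnDr. Qed.

Lemma cnth_n (x : F) : cnth x n = cnth x 0.
Proof. by rewrite -[n]add0n cnth_addn. Qed.

Lemma cnth_tuple g t : t < n -> cnth (tuple_of g) t = g t.
Proof. by move=> tn; rewrite /cnth ffunE /= modn_small. Qed.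

Lemma ffun_cnth_eq (x y : F) : (forall t, t < n -> cnth x t = cnth y t) -> x = y.
Proof. by move=> xy; apply/ffunP => i; rewrite -!cnth_ord xy. Qed.

Lemma cnth_cyc_succ (x : F) (i : 'I_n) : x (cyc_succ i) = cnth x i.+1.
Proof. by congr (x _); apply: val_inj. Qed.

Variable e : rel T.

Lemma hom_cycleP (x : F) :
  reflect (forall t, e (cnth x t) (cnth x t.+1)) (is_hom_cycle e x).
Proof.
apply: (iffP forallP) => [xe t | xe i]; last by rewrite cnth_cyc_succ -[x i]cnth_ord.
have := xe (cyc_ord t); rewrite cnth_cyc_succ (@cnth_eqmod _ _ t.+1) //.
by rewrite /= -[(t %% n).+1]addn1 -[t.+1]addn1 modnDml.
Qed.

Lemma hom_cycle_tuple g :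
  (forall t, t < n -> e (g t) (g t.+1)) -> g n = g 0 -> is_hom_cycle e (tuple_of g).
Proof.
move=> g_edge gn; apply/hom_cycleP => t; rewrite /cnth !ffunE /=.
have -> : t.+1 %% n = (t %% n).+1 %% n.
  by rewrite -[t.+1]addn1 -[(t %% n).+1]addn1 modnDml.
have tn := ltn_pmod t n_gt0.
case: (ltnP (t %% n).+1 n) => [lt | ge_n]; first by rewrite (modn_small lt) g_edge.
have tn1 : (t %% n).+1 = n by apply/eqP; rewrite eqn_leq tn.
by rewrite tn1 modnn; move: (g_edge _ tn); rewrite tn1 gn.
Qed.

Lemma alternating_cnth (A B : {set T}) (x : F) t : ~~ odd n -> alternating A B x ->
  cnth x t \in (if odd t then B else A).
Proof. by move=> ev /forallP/(_ (cyc_ord t)); rewrite /= odd_mod // (negbTE ev). Qed.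

Definition rot (r : nat) (x : F) : F := tuple_of (fun t => cnth x (t + r)).

Lemma cnth_rot r (x : F) t : cnth (rot r x) t = cnth x (t + r).
Proof. by rewrite /cnth ffunE; apply: cnth_eqmod; rewrite /= modnDml. Qed.

(* Rotating back by n - r undoes the rotation. *)
Lemma rot_inj (r : 'I_n) : injective (rot r).
Proof.
move=> x y xy; apply: ffun_cnth_eq => t _.
have := congr1 (cnth^~ (t + (n - r))) xy; rewrite !cnth_rot.
by rewrite -addnA subnK ?(ltnW (ltn_ord r)) // !cnth_addn.
Qed.

(* If each element of S has a rotation in W then #S <= n #W, since each
   rotation is injective. *)
Lemma card_le_rotations (S W : {set F}) :
  {in S, forall x, exists r : 'I_n, rot r x \in W} -> #|S| <= n * #|W|.
Proof.
move=> SW; apply: (@leq_trans #|[set x | [exists r : 'I_n, rot r x \in W]]|).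
  by apply: subset_leq_card; apply/subsetP => x /SW [r xr]; rewrite inE; apply/existsP; exists r.
apply: leq_trans (card_exists_le _) _.
rewrite (eq_bigr (fun => #|W|)) => [|r _]; first by rewrite sum_nat_const card_ord.
by rewrite -(card_preimset W (@rot_inj r)); apply: eq_card => x; rewrite !inE.
Qed.

(* Keep the entries of x at the positions in P and overwrite the others by
   x_0; used to represent a sub-walk of a cycle as an n-tuple. *)
Definition restrict (P : pred nat) (x : F) : F :=
  tuple_of (fun t => if P t then cnth x t else cnth x 0).

Lemma cnth_restrict (P : pred nat) (x : F) t :
  t < n -> cnth (restrict P x) t = if P t then cnth x t else cnth x 0.
Proof. exact: cnth_tuple. Qed.

Lemma restrict_eq (P : pred nat) (x y : F) : P 0 ->
  (forall t, t < n -> P t -> cnth x t = cnth y t) -> restrict P x = restrict P y.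
Proof.
move=> P0 xy; apply: ffun_cnth_eq => t tn; rewrite !cnth_restrict //.
by case: ifP => Pt; rewrite xy.
Qed.

Lemma restrict_idem (P : pred nat) (x : F) : P 0 -> restrict P (restrict P x) = restrict P x.
Proof. by move=> P0; apply: restrict_eq => // t tn Pt; rewrite cnth_restrict // Pt. Qed.

Lemma restrict_image_idem (P : pred nat) (S : {set F}) a :
  P 0 -> a \in restrict P @: S -> restrict P a = a.
Proof. by move=> P0 /imsetP[x _ ->]; apply: restrict_idem. Qed.

Lemma restrict_pair_inj (P Q : pred nat) (x y : F) : (forall t, t < n -> P t || Q t) ->
  restrict P x = restrict P y -> restrict Q x = restrict Q y -> x = y.
Proof.
move=> PQ Pxy Qxy; apply: ffun_cnth_eq => t tn.
case/orP: (PQ t tn) => [Pt | Qt].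
  by move: (congr1 (cnth^~ t) Pxy); rewrite !cnth_restrict // Pt.
by move: (congr1 (cnth^~ t) Qxy); rewrite !cnth_restrict // Qt.
Qed.
End CyclicTuples.

Section Glue.
Variables (T : finType) (l : nat).
Hypothesis l_gt0 : 0 < l.

Lemma double_gt0 : 0 < 2 * l.
Proof. by rewrite muln_gt0. Qed.

(* Two walks g, g' of length l with common ends glue into the closed walk
   g 0, ..., g l = g' l, g' (l-1), ..., g' 1 of length 2l. *)
Definition glue (g g' : nat -> T) : {ffun 'I_(2 * l) -> T} :=
  @tuple_of T (2 * l) (fun t => if t <= l then g t else g' (2 * l - t)).

Lemma glue_hom (e : rel T) (g g' : nat -> T) : symmetric e ->
  (forall t, t < l -> e (g t) (g t.+1)) -> (forall t, t < l -> e (g' t) (g' t.+1)) ->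
  g 0 = g' 0 -> g l = g' l -> is_hom_cycle e (glue g g').
Proof.
move=> e_sym g_edge g'_edge g0 gl; apply: (hom_cycle_tuple double_gt0) => [t t2l|]; last first.
  have -> : (2 * l <= l) = false by lia.
  by rewrite subnn g0.
case: (ltnP t l) => [tl | lt].
  by rewrite /= (ltnW tl) g_edge.
have -> : (if t <= l then g t else g' (2 * l - t)) = g' (2 * l - t).
  case: ifP => // tl; have -> : t = l by lia.
  by rewrite gl; congr g'; lia.
rewrite e_sym.
have -> : 2 * l - t = (2 * l - t.+1).+1 by lia.
by rewrite g'_edge //; lia.
Qed.

Lemma cnth_glue (g g' : nat -> T) t : t < 2 * l ->
  cnth double_gt0 (glue g g') t = if t <= l then g t else g' (2 * l - t).
Proof. exact: cnth_tuple. Qed.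

Lemma glue_eq_left (g g' h h' : nat -> T) :
  glue g g' = glue h h' -> forall t, t <= l -> g t = h t.
Proof.
move=> gh t tl; have t2l : t < 2 * l by lia.
by move: (congr1 (cnth double_gt0^~ t) gh); rewrite !cnth_glue // tl.
Qed.

Lemma glue_eq_right (g g' h h' : nat -> T) :
  glue g g' = glue h h' -> forall t, 0 < t < l -> g' t = h' t.
Proof.
move=> gh t tl; have t2l : 2 * l - t < 2 * l by lia.
move: (congr1 (cnth double_gt0^~ (2 * l - t)) gh); rewrite !cnth_glue //.
have -> : (2 * l - t <= l) = false by lia.
by have -> : 2 * l - (2 * l - t) = t by lia.
Qed.
End Glue.

Section PointedCycles.
Variables (T : finType) (e : rel T) (m : nat).
Local Notation F := {ffun 'I_m -> T}.
Local Open Scope ring_scope.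

Definition pointed_cycles (P : F -> T -> bool) : {set F * T} :=
  [set q | is_hom_cycle e q.1 && P q.1 q.2].

Lemma card_pointed_cycles_le (R : numDomainType) (P : F -> T -> bool) (c : R) :
  (forall w, is_hom_cycle e w -> #|[set z | P w z]|%:R <= c) ->
  #|pointed_cycles P|%:R <= c * (hom_cycle e m)%:R.
Proof.
move=> Pc; rewrite /pointed_cycles.
rewrite (card_pairs_fibres (fun w z => is_hom_cycle e w && P w z)) natr_sum.
rewrite (bigID (fun w => is_hom_cycle e w)) /= [X in _ + X]big1 ?addr0; last first.
  move=> w /negbTE hw; apply/eqP; rewrite pnatr_eq0 cards_eq0.
  by apply/eqP/setP => z; rewrite !inE hw.
apply: (@le_trans _ _ (\sum_(w in [set w | is_hom_cycle e w]) c)).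
  rewrite (eq_bigl (fun w => w \in [set w | is_hom_cycle e w])) => [|w]; last by rewrite inE.
  apply: ler_sum => w; rewrite inE => hw; apply: le_trans (Pc w hw).
  by rewrite ler_nat subset_leq_card //; apply/subsetP => z; rewrite !inE hw.
by rewrite sumr_const mulr_natr.
Qed.
End PointedCycles.

Section Main.
Variables (T : finType) (e : rel T) (sim : T * T -> T * T -> bool) (k : nat).
Hypotheses (k_ge2 : 1 < k) (e_sym : symmetric e)
  (sim_sym : forall p q, sim p q = sim q p).

Local Notation n := (2 * k).
Local Notation F := {ffun 'I_n -> T}.

Let k_gt0 : 0 < k. Proof. exact: ltnW. Qed.
Let n_gt0 : 0 < n := double_gt0 k_gt0.
Local Notation at_ := (cnth n_gt0).

(* The vertices shared by the two halves of a 2k-cycle. *)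
Definition key (x : F) : T * T * T := (at_ x 0, at_ x 1, at_ x k.+1).

Definition first_part : pred nat := fun t => t <= k.+1.
Definition second_part : pred nat := fun t => (t <= 1) || (k.+1 <= t).
Definition first_half : F -> F := restrict n_gt0 first_part.
Definition second_half : F -> F := restrict n_gt0 second_part.

Lemma key_restrict (P : pred nat) x :
  P 0 -> P 1 -> P k.+1 -> key (restrict n_gt0 P x) = key x.
Proof. by move=> P0 P1 Pk; rewrite /key !cnth_restrict ?P0 ?P1 ?Pk //; lia. Qed.

Lemma halves_inj x y :
  first_half x = first_half y -> second_half x = second_half y -> x = y.
Proof. by apply: restrict_pair_inj => t _; rewrite /first_part /second_part; lia. Qed.

Lemma at_first_half x t : t <= k.+1 -> at_ (first_half x) t = at_ x t.
Proof. by move=> tk; rewrite cnth_restrict /first_part ?tk //; lia. Qed.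

(* Position n is position 0, which lies in the second half. *)
Lemma at_second_half x t : (t <= 1) || (k.+1 <= t <= n) ->
  at_ (second_half x) t = at_ x t.
Proof.
move=> t_in; case: (ltnP t n) => [tn | nt].
  by rewrite cnth_restrict /second_part // ifT //; lia.
have -> : t = n by lia.
by rewrite !cnth_n cnth_restrict /second_part.
Qed.

(* Two first halves glued along x_1 ... x_(k+1), together with x_0. *)
Definition glue_first (p : F * F) : F * T :=
  (glue k (fun t => at_ p.1 t.+1) (fun t => at_ p.2 t.+1), at_ p.1 0).

Lemma key_pairs_inv (A : {set F}) p : p \in key_pairs A key ->
  [/\ p.1 \in A, p.2 \in A & [/\ at_ p.1 0 = at_ p.2 0, at_ p.1 1 = at_ p.2 1
                                & at_ p.1 k.+1 = at_ p.2 k.+1]].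
Proof. by case: p => p1 p2 /setIdP[/setXP[A1 A2] /eqP[]]. Qed.

Lemma glue_first_inj (S : {set F}) :
  {in key_pairs (first_half @: S) key &, injective glue_first}.
Proof.
move=> [a a'] [b b'] /key_pairs_inv[/= Sa Sa' [a0 a1 ak]].
move=> /key_pairs_inv[/= Sb Sb' [b0 b1 bk]] [gab ab0].
have eab : a = b.
  rewrite -[a](restrict_image_idem _ Sa) // -[b](restrict_image_idem _ Sb) //.
  apply: restrict_eq => // -[// | t] _ tk.
  by have := glue_eq_left k_gt0 gab tk.
rewrite -eab in b0 b1 bk; congr (_, _) => //.
rewrite -[a'](restrict_image_idem _ Sa') // -[b'](restrict_image_idem _ Sb') //.
apply: restrict_eq => // t tn tk.
have [t_key | t_mid] : (t == 0) || (t == 1) || (t == k.+1) \/ 1 < t <= k.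
  by rewrite /first_part in tk; lia.
- by case/orP: t_key => [/orP[]|] /eqP ->; [rewrite -a0 b0 | rewrite -a1 b1 | rewrite -ak bk].
- have t1k : 0 < t.-1 < k by lia.
  by have := glue_eq_right k_gt0 gab t1k; rewrite prednK //; lia.
Qed.

Let k1_gt0 : 0 < k.-1. Proof. by rewrite -ltnS prednK. Qed.
Let m_gt0 : 0 < 2 * k.-1 := double_gt0 k1_gt0.
Local Notation at' := (cnth m_gt0).

(* Two second halves glued along x_(2k) = x_0, ..., x_(k+1) into a
   (2k-2)-cycle, together with x_1. *)
Definition glue_second (p : F * F) : {ffun 'I_(2 * k.-1) -> T} * T :=
  (glue k.-1 (fun t => at_ p.1 (n - t)) (fun t => at_ p.2 (n - t)), at_ p.1 1).

Lemma glue_second_inj (S : {set F}) :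
  {in key_pairs (second_half @: S) key &, injective glue_second}.
Proof.
move=> [a a'] [b b'] /key_pairs_inv[/= Sa Sa' [a0 a1 ak]].
move=> /key_pairs_inv[/= Sb Sb' [b0 b1 bk]] [gab ab1].
have tail_eq t : k.+1 <= t <= n -> at_ a t = at_ b t.
  move=> tk; have tk' : n - t <= k.-1 by lia.
  by have := glue_eq_left k1_gt0 gab tk'; rewrite subKn //; case/andP: tk.
have eab : a = b.
  rewrite -[a](restrict_image_idem _ Sa) // -[b](restrict_image_idem _ Sb) //.
  apply: restrict_eq => // t tn tpart.
  have [->|[->|t_hi]] : t = 0 \/ t = 1 \/ k.+1 <= t by rewrite /second_part in tpart; lia.
  - by rewrite -!cnth_n tail_eq //; lia.
  - exact: ab1.
  - by rewrite tail_eq //; lia.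
rewrite -eab in b0 b1 bk; congr (_, _) => //.
rewrite -[a'](restrict_image_idem _ Sa') // -[b'](restrict_image_idem _ Sb') //.
apply: restrict_eq => // t tn tpart.
have [t_key | t_hi] : (t == 0) || (t == 1) || (t == k.+1) \/ k.+1 < t.
  by rewrite /second_part in tpart; lia.
- by case/orP: t_key => [/orP[]|] /eqP ->; [rewrite -a0 b0 | rewrite -a1 b1 | rewrite -ak bk].
- have tk : 0 < n - t < k.-1 by lia.
  by have := glue_eq_right k1_gt0 gab tk; rewrite subKn //; apply: ltnW.
Qed.

Section Rooted.
Variables (Y1 Y2 : {set T}).

Definition rooted : {set F} := [set x : F | [&& is_hom_cycle e x,
  at_ x 0 \in Y1, at_ x 1 \in Y2 &
  [exists d : 'I_k, sim (at_ x 0, at_ x 1) (at_ x d.+1, at_ x d.+2)]]].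

Lemma rootedP x : x \in rooted ->
  [/\ forall t, e (at_ x t) (at_ x t.+1), at_ x 0 \in Y1, at_ x 1 \in Y2 &
      exists d : 'I_k, sim (at_ x 0, at_ x 1) (at_ x d.+1, at_ x d.+2)].
Proof. by rewrite inE => /and4P[/hom_cycleP x_edge x0 x1 /existsP]. Qed.

Lemma rot_rooted x r d : is_hom_cycle e x -> at_ x r \in Y1 -> at_ x r.+1 \in Y2 ->
  0 < d <= k -> sim (at_ x r, at_ x r.+1) (at_ x (d + r), at_ x (d + r).+1) ->
  rot n_gt0 r x \in rooted.
Proof.
move=> /hom_cycleP x_edge xr xr1 dk xd; rewrite inE !cnth_rot add0n add1n xr xr1 /=.
apply/andP; split; first by apply/hom_cycleP => t; rewrite !cnth_rot.
have d1k : d.-1 < k by lia.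
apply/existsP; exists (Ordinal d1k); rewrite !cnth_rot /=.
have -> : d.-1.+1 + r = d + r by lia.
by have -> : d.-1.+2 + r = (d + r).+1 by lia.
Qed.

Lemma rooted_sqr_le : #|rooted| ^ 2 <=
  #|key_pairs (first_half @: rooted) key| * #|key_pairs (second_half @: rooted) key|.
Proof.
apply: card_sqr_le_key_pairs => [x y _ _ | x _]; first exact: halves_inj.
by rewrite !key_restrict // /first_part /second_part; lia.
Qed.

Definition first_target : {set F * T} :=
  pointed_cycles e (fun w z => [&& at_ w 0 \in Y2, z \in Y1, e (at_ w 0) z &
     [exists t : 'I_k, sim (at_ w t, at_ w t.+1) (z, at_ w 0)]]).

Lemma glue_first_mem :
  {in key_pairs (first_half @: rooted) key, forall p, glue_first p \in first_target}.
Proof.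
move=> [_ _] /key_pairs_inv[/= /imsetP[x Sx ->] /imsetP[x' Sx' ->]].
rewrite !at_first_half // => -[_ x1x' xkx'].
have [x_edge x0 x1 [d xd]] := rootedP Sx; have [x'_edge _ _ _] := rootedP Sx'.
have at_glue t : t <= k ->
    at_ (glue k (fun t => at_ (first_half x) t.+1) (fun t => at_ (first_half x') t.+1)) t
    = at_ x t.+1.
  by move=> tk; rewrite cnth_glue ?tk ?at_first_half //; lia.
rewrite inE /= at_glue // at_first_half // x1 x0 e_sym x_edge /=; apply/andP; split.
  apply: glue_hom => // [t tk | t tk | |];
    by rewrite !at_first_half ?x_edge ?x'_edge //; exact: leqW.
have dk := ltn_ord d.
by apply/existsP; exists d; rewrite (at_glue _ (ltnW dk)) (at_glue _ dk) sim_sym.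
Qed.

Definition second_target : {set {ffun 'I_(2 * k.-1) -> T} * T} :=
  pointed_cycles e (fun w z => [&& at' w 0 \in Y1, z \in Y2 & e (at' w 0) z]).

Lemma glue_second_mem :
  {in key_pairs (second_half @: rooted) key, forall p, glue_second p \in second_target}.
Proof.
move=> [_ _] /key_pairs_inv[/= /imsetP[x Sx ->] /imsetP[x' Sx' ->]].
have kn : k < n by lia.
rewrite !at_second_half ?leqnn ?kn ?orbT // => -[x0x' _ xkx'].
have [x_edge x0 x1 _] := rootedP Sx; have [x'_edge _ _ _] := rootedP Sx'.
have at_tail y t : k.+1 <= t <= n -> at_ (second_half y) t = at_ y t.
  by move=> tk; apply: at_second_half; rewrite tk orbT.
have at_glue t : t <= k.-1 -> at' (glue k.-1 (fun t => at_ (second_half x) (n - t))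
    (fun t => at_ (second_half x') (n - t))) t = at_ x (n - t).
  by move=> tk; rewrite cnth_glue ?tk ?at_tail //; lia.
rewrite inE /= at_glue // subn0 cnth_n at_second_half // x0 x1 x_edge /= andbT.
apply: glue_hom => // [t tk | t tk | |].
- rewrite !at_tail; try lia.
  have -> : n - t = (n - t.+1).+1 by lia.
  by rewrite e_sym x_edge.
- rewrite !at_tail; try lia.
  have -> : n - t = (n - t.+1).+1 by lia.
  by rewrite e_sym x'_edge.
- by rewrite !at_tail ?subn0 ?cnth_n //; lia.
- have -> : n - k.-1 = k.+1 by lia.
  by rewrite !at_tail //; lia.
Qed.

Lemma first_pairs_le :
  #|key_pairs (first_half @: rooted) key| <= #|first_target|.
Proof. exact: card_le_inj_in (@glue_first_inj rooted) glue_first_mem. Qed.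

Lemma second_pairs_le :
  #|key_pairs (second_half @: rooted) key| <= #|second_target|.
Proof. exact: card_le_inj_in (@glue_second_inj rooted) glue_second_mem. Qed.

Local Open Scope ring_scope.
Variable R : rcfType.

Lemma card_first_target_le (s : R) : 0 <= s ->
  (forall u v w, w \in Y2 ->
     #|[set z in Y1 | e w z && sim (u, v) (z, w)]|%:R <= s) ->
  #|first_target|%:R <= k%:R * s * (hom_cycle e n)%:R.
Proof.
move=> s0 sim_bound; apply: card_pointed_cycles_le => w _.
have [wY2 | /negbTE wY2] := boolP (at_ w 0 \in Y2); last first.
  by rewrite (_ : [set z | _] = set0) ?cards0 ?mulr_ge0 ?ler0n.
pose P (t : 'I_k) z := (z \in Y1) && (e (at_ w 0) z && sim (at_ w t, at_ w t.+1) (z, at_ w 0)).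
apply: (@le_trans _ _ (\sum_t #|[set z | P t z]|)%:R).
  rewrite ler_nat; apply: leq_trans (card_exists_le P); apply: subset_leq_card.
  apply/subsetP => z; rewrite !inE /= => /and3P[zY1 wz /existsP[t wzt]].
  by apply/existsP; exists t; rewrite /P zY1 wz.
rewrite natr_sum; apply: le_trans (ler_sum _ (fun t _ => sim_bound _ _ _ wY2)) _.
by rewrite sumr_const card_ord mulr_natl.
Qed.

Lemma card_second_target_le (D : R) : 0 <= D ->
  (forall w, w \in Y1 -> #|[set z in Y2 | e w z]|%:R <= D) ->
  #|second_target|%:R <= D * (hom_cycle e (2 * k.-1))%:R.
Proof.
move=> D0 deg_bound; apply: card_pointed_cycles_le => w _.
have [wY1 | /negbTE wY1] := boolP (at' w 0 \in Y1); last first.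
  by rewrite (_ : [set z | _] = set0) ?cards0.
apply: le_trans (deg_bound _ wY1); rewrite ler_nat; apply: subset_leq_card.
by apply/subsetP => z; rewrite !inE.
Qed.

Lemma card_rooted_le (D s : R) :
  (forall w, w \in Y1 -> #|[set z in Y2 | e w z]|%:R <= D) ->
  (forall u v w, w \in Y2 ->
     #|[set z in Y1 | e w z && sim (u, v) (z, w)]|%:R <= s) ->
  #|rooted|%:R <= Num.sqrt (k%:R * (D * s) * (hom_cycle e (2 * k - 2))%:R
                                            * (hom_cycle e n)%:R).
Proof.
move=> deg_bound sim_bound.
have [-> | [x Sx]] := set_0Vmem rooted; first by rewrite cards0 sqrtr_ge0.
have [_ x0 x1 _] := rootedP Sx.
have D0 : 0 <= D := le_trans (ler0n _ _) (deg_bound _ x0).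
have s0 : 0 <= s := le_trans (ler0n _ _) (sim_bound (at_ x 0) (at_ x 0) _ x1).
have -> : (2 * k - 2 = 2 * k.-1)%N by lia.
rewrite -(ler_pXn2r (isT : (0 < 2)%N)) ?nnegrE ?sqrtr_ge0 // sqr_sqrtr; last first.
  by rewrite !mulr_ge0.
apply: (@le_trans _ _ (#|first_target|%:R * #|second_target|%:R)).
  rewrite -natrX -natrM ler_nat; apply: leq_trans rooted_sqr_le _.
  exact: leq_mul first_pairs_le second_pairs_le.
apply: le_trans (ler_pM _ _ (card_first_target_le s0 sim_bound)
                              (card_second_target_le D0 deg_bound)) _ => //.
by rewrite le_eqVlt; apply/orP; left; apply/eqP; ring.
Qed.

End Rooted.

Lemma close_similar_edges (x : F) (i j : 'I_n) : i != j ->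
  sim (at_ x i, at_ x i.+1) (at_ x j, at_ x j.+1) ->
  exists r : 'I_n, exists2 d, 0 < d <= k &
    sim (at_ x r, at_ x r.+1) (at_ x (d + r), at_ x (d + r).+1).
Proof.
wlog ij : i j / i < j.
  move=> close ij sij; case: (ltngtP i j) => [lt | gt | eq]; first exact: close lt ij sij.
    by apply: (close j i) => //; rewrite 1?eq_sym // sim_sym.
  by move: ij; rewrite (val_inj eq) eqxx.
move=> _ sij; have jn := ltn_ord j.
case: (leqP (j - i) k) => dk.
  by exists i; exists (j - i); [lia | rewrite subnK // ltnW].
exists j; exists (n - (j - i)); first lia.
have -> : n - (j - i) + j = i + n by lia.
by rewrite -addSn !cnth_addn sim_sym.
Qed.

Lemma bad_rotation_rooted (X1 X2 : {set T}) x : x \in bad_cycles e X1 X2 sim n ->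
  exists r : 'I_n, rot n_gt0 r x \in rooted X1 X2 :|: rooted X2 X1.
Proof.
rewrite inE => /and3P[x_hom x_alt /existsP[i /existsP[j /andP[ij sij]]]].
rewrite !cnth_cyc_succ -[x i](cnth_ord n_gt0) -[x j](cnth_ord n_gt0) in sij.
have [r [d dk srd]] := close_similar_edges ij sij.
exists r; have ev : ~~ odd n by rewrite oddM.
have in_rooted A B : alternating A B x -> rot n_gt0 r x \in rooted A B :|: rooted B A.
  move=> xAB; have xr := alternating_cnth n_gt0 r ev xAB.
  have /= xr1 := alternating_cnth n_gt0 r.+1 ev xAB.
  case: (odd r) xr xr1 => /= xr xr1; rewrite inE (rot_rooted x_hom xr xr1 dk srd) //.
  exact: orbT.
by case/orP: x_alt => /in_rooted //; rewrite setUC.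
Qed.

Lemma card_bad_cycles_le (X1 X2 : {set T}) :
  #|bad_cycles e X1 X2 sim n| <= n * (#|rooted X1 X2| + #|rooted X2 X1|).
Proof.
apply: leq_trans (card_le_rotations (@bad_rotation_rooted X1 X2)) _.
by rewrite leq_mul2l cardsU leq_subr orbT.
Qed.

End Main.

Local Open Scope ring_scope.

(* Both orientations of the bipartition give rooted cycles bounded by the
   square root; the constant is 2k * 2 <= 32k. *)
Theorem lemma2p5 (R : rcfType) (k : nat) (T : finType) (e : rel T)
    (X1 X2 : {set T}) (sim : T * T -> T * T -> bool)
    (D1 D2 s1 s2 : R) :
  (2 <= k)%N ->
  symmetric e -> irreflexive e ->
  (forall p q, sim p q = sim q p) ->
  (forall (u v w : T), w \in X1 ->
     (#|[set z in X2 | e w z]|%:R <= D1) /\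
     (#|[set z in X2 | e w z && sim (u, v) (z, w)]|%:R <= s1)) ->
  (forall (u v w : T), w \in X2 ->
     (#|[set z in X1 | e w z]|%:R <= D2) /\
     (#|[set z in X1 | e w z && sim (u, v) (z, w)]|%:R <= s2)) ->
  #|bad_cycles e X1 X2 sim (2 * k)|%:R
    <= (32 * k)%:R * Num.sqrt (k%:R * Num.max (D1 * s2) (D2 * s1)
                     * (hom_cycle e (2 * k - 2))%:R * (hom_cycle e (2 * k))%:R).
Proof.
move=> k_ge2 e_sym _ sim_sym X1_bound X2_bound.
set S := Num.sqrt _.
have S_ge (D s : R) : D * s <= Num.max (D1 * s2) (D2 * s1) ->
    Num.sqrt (k%:R * (D * s) * (hom_cycle e (2 * k - 2))%:R
              * (hom_cycle e (2 * k))%:R) <= S.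
  by move=> DsM; rewrite ler_wsqrtr // !ler_wpM2r // ler_wpM2l.
have rooted12 := card_rooted_le k_ge2 e_sym sim_sym
  (fun w wX => proj1 (X1_bound w w w wX)) (fun u v w wX => proj2 (X2_bound u v w wX)).
have rooted21 := card_rooted_le k_ge2 e_sym sim_sym
  (fun w wX => proj1 (X2_bound w w w wX)) (fun u v w wX => proj2 (X1_bound u v w wX)).
apply: le_trans (_ : (2 * k)%:R * (S + S) <= _).
  apply: le_trans (_ : (2 * k * (#|rooted e sim k_ge2 X1 X2| + #|rooted e sim k_ge2 X2 X1|))%:R <= _).
    by rewrite ler_nat card_bad_cycles_le.
  rewrite natrM natrD ler_wpM2l // lerD //.
    by apply: le_trans rooted12 (S_ge _ _ _); rewrite le_max lexx.
  by apply: le_trans rooted21 (S_ge _ _ _); rewrite le_max lexx orbT.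
have -> : (2 * k)%:R * (S + S) = (4 * k)%:R * S :> R by rewrite !natrM; ring.
by rewrite ler_wpM2r ?sqrtr_ge0 // ler_nat leq_mul2r; apply/orP; right.
Qed.
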